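(* Let $\mathcal{X}=\prod_{r=1}^d\mathcal{Z}_r$ be a product of nonempty convex compact subsets of Euclidean spaces and let $F$ be an $L$-Lipschitz continuous operator on $\mathcal{X}$ (with values in the ambient Euclidean space), with components $F=(F_1,\dots,F_d)$ and $B_F:=\max_{1\le r\le d}\sup_{x\in\mathcal{X}}\|F_r(x)\|_2$. Suppose the average $(\alpha,\ell,h)$-generalized Minty property (defined in the context) holds. Then for any $\epsilon>0$, after $T\ge \frac{2D_{\mathcal{X}}^2h}{\ell\epsilon^2}$ iterations of the rescaled optimistic gradient descent with learning rate $\eta\le\frac14\sqrt{\frac{\ell}{h^3L^2+hB_F^2\alpha^2d}}$, there is an iterate $x^{(t)}$, $t\in\{1,\dots,T\}$, such that for every $x^\star\in\mathcal{X}$, $$\langle x^{(t)},F(x^{(t)})\rangle-\langle x^\star,F(x^{(t)})\rangle\le 2d\Big(\frac{\max_{1\le r\le d}D_{\mathcal{Z}_r}}{\eta\ell}+\frac{hB_F}{\ell}\Big)\epsilon .$$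
   Context: $D_{\mathcal{Y}}$ denotes the $\ell_2$ diameter of a set $\mathcal{Y}$. $\mathbf{1}_{\mathcal{Z}_r}$ is the vector with $1$ on the coordinates of the component $\mathcal{Z}_r$ and $0$ elsewhere; $\circ$ is the coordinatewise product and inequalities between vectors are coordinatewise. Let $A(x)=\sum_{r=1}^d a_r(x)\mathbf{1}_{\mathcal{Z}_r}$, where each $a_r:\mathcal{X}\to\mathbb{R}$ is $\alpha$-Lipschitz and $0<\ell\le A(x)\le h$ for all $x$, and $W(x)=\sum_{r=1}^d w_r(x)\mathbf{1}_{\mathcal{Z}_r}$ with $0<\ell\le W(x)\le h$. The average $(\alpha,\ell,h)$-generalized Minty property holds (for $F,A,W$) if for every $T$ and every sequence $(x^{(t)})_{1\le t\le T}$ in $\mathcal{X}$ there is $x^\star\in\mathcal{X}$ (depending on the sequence) with $\sum_{t=1}^T\langle x^{(t)}-x^\star, F(x^{(t)})\circ A(x^{(t)})\circ W(x^\star)\rangle\ge0$. Rescaled optimistic gradient descent with learning rate $\eta>0$: from arbitrary $x^{(0)}=\hat x^{(1)}\in\mathcal{X}$, for $t\ge1$: $x^{(t)}=\Pi_{\mathcal{X}}(\hat x^{(t)}-\eta A(x^{(t-1)})\circ F(x^{(t-1)}))$, $\hat x^{(t+1)}=\Pi_{\mathcal{X}}(\hat x^{(t)}-\eta A(x^{(t)})\circ F(x^{(t)}))$, with $\Pi_{\mathcal{X}}$ the Euclidean projection onto $\mathcal{X}$. *)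

From HB Require Import structures.
From mathcomp Require Import all_boot all_order all_algebra.
From mathcomp Require Import all_classical all_reals all_analysis.
Set Implicit Arguments. Unset Strict Implicit. Unset Printing Implicit Defensive.
Import Order.TTheory GRing.Theory Num.Theory.
Import numFieldTopology.Exports numFieldNormedType.Exports.
Local Open Scope classical_set_scope.
Local Open Scope ring_scope.

Section Defs.
Variables (R : realType) (n d : nat).
Notation vec := 'rV[R]_n.

Definition inner (u v : vec) : R := \sum_(i < n) u 0 i * v 0 i.
Definition enorm (u : vec) : R := Num.sqrt (inner u u).

Definition hadamard (u v : vec) : vec := \row_i (u 0 i * v 0 i).

Definition diam (Y : set vec) : R :=
  sup [set enorm (a - b) | a in Y & b in Y].

(* The coordinates 'I_n are partitioned into d blocks by blk : 'I_n -> 'I_d;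
   block r carries the factor Z_r. *)
Variable blk : 'I_n -> 'I_d.

Definition ind (r : 'I_d) : vec := \row_i (if blk i == r then 1 else 0).

Definition blockproj (r : 'I_d) (x : vec) : vec := hadamard (ind r) x.

Definition blockfun (a : 'I_d -> vec -> R) (x : vec) : vec :=
  \sum_(r < d) a r x *: ind r.

(* X = prod_r Z_r, where Z r is a subset of vectors supported on block r *)
Definition prodset (Z : 'I_d -> set vec) : set vec :=
  [set x | forall r, Z r (blockproj r x)].

Definition is_proj (Y : set vec) (y p : vec) : Prop :=
  Y p /\ forall z, Y z -> enorm (y - p) <= enorm (y - z).

Definition avg_gen_minty (X : set vec) (F A W : vec -> vec) : Prop :=
  forall (T : nat) (x : nat -> vec),
    (forall t, (1 <= t <= T)%N -> X (x t)) ->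
    exists2 xs, X xs &
      0 <= \sum_(1 <= t < T.+1) inner (x t - xs) (hadamard (hadamard (F (x t)) (A (x t))) (W xs)).

Definition BF (X : set vec) (F : vec -> vec) : R :=
  \big[Num.max/0]_(r < d) sup [set enorm (blockproj r (F x)) | x in X].

Definition maxdiam (Z : 'I_d -> set vec) : R :=
  \big[Num.max/0]_(r < d) diam (Z r).

End Defs.

From HB Require Import structures.
From mathcomp Require Import all_boot all_order all_algebra.
From mathcomp Require Import all_classical all_reals all_analysis.
From mathcomp Require Import ring lra.
Import Order.TTheory GRing.Theory Num.Theory.
Import numFieldTopology.Exports numFieldNormedType.Exports.
Local Open Scope classical_set_scope.
Local Open Scope ring_scope.

(* Weight all distances by W(s), where s is the point that the average Minty
   property provides for the iterates x_1, ..., x_T.  Testing each projection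
   step, block by block, against the other iterate and against s gives a one-step
   decrease of 2 |xh_t - s|^2 + |x_{t-1} - xh_t|^2, up to the Minty summand
   <x_t - s, A(x_t) F(x_t)> and the variation of x |-> A(x) F(x).  That map is
   Lipschitz with squared constant 2 (h^2 L^2 + d alpha^2 B_F^2), so the bound on
   eta absorbs its variation into the residuals.  Summing over t, the Minty
   inequality bounds the total residual by O(h D_X^2), hence some iterate has
   residual O(eps^2).  There the projection inequality on each block Z_r bounds
   <x_t - x, F_r(x_t)> by the residual times D_{Z_r} / (eta l) + h B_F / l, and
   one sums over the d blocks. *)

Section WeightedSums.
Context {R : realFieldType} {I : finType}.
Implicit Types (c g u v w p q s : I -> R).

Definition sqdist u v := \sum_i (u i - v i) ^+ 2.
Definition wsqdist c u v := \sum_i c i * (u i - v i) ^+ 2.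

Lemma sqdist_ge0 u v : 0 <= sqdist u v.
Proof. by apply: sumr_ge0 => i _; rewrite sqr_ge0. Qed.

Lemma sqdistC u v : sqdist u v = sqdist v u.
Proof. by apply: eq_bigr => i _; rewrite -sqrrN opprB. Qed.

Lemma sqdist_le_split u v w : sqdist u w <= 2 * sqdist u v + 2 * sqdist v w.
Proof.
rewrite /sqdist !mulr_sumr -big_split /=; apply: ler_sum => i _.
by rewrite -subr_ge0 (_ : _ - _ = (u i - 2 * v i + w i) ^+ 2) ?sqr_ge0 //; ring.
Qed.

Lemma wsqdist_ge0 c u v : (forall i, 0 <= c i) -> 0 <= wsqdist c u v.
Proof. by move=> c0; apply: sumr_ge0 => i _; rewrite mulr_ge0 ?sqr_ge0. Qed.

Lemma wsqdist_ge l c u v : (forall i, l <= c i) -> l * sqdist u v <= wsqdist c u v.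
Proof.
by move=> lc; rewrite mulr_sumr; apply: ler_sum => i _; rewrite ler_wpM2r ?sqr_ge0.
Qed.

Lemma wsqdist_le h c u v : (forall i, c i <= h) -> wsqdist c u v <= h * sqdist u v.
Proof.
by move=> ch; rewrite mulr_sumr; apply: ler_sum => i _; rewrite ler_wpM2r ?sqr_ge0.
Qed.

(* Four times the two hypotheses plus the slack of the claim is
   [\sum_i c i * (2 * eta * (g i - g' i) - (p i - q i)) ^+ 2 >= 0]. *)
Lemma optimistic_step_le c u p q s g g' eta :
  (forall i, 0 <= c i) ->
  \sum_i c i * ((u i - eta * g' i - p i) * (q i - p i)) <= 0 ->
  \sum_i c i * ((u i - eta * g i - q i) * (s i - q i)) <= 0 ->
  4 * eta * (\sum_i c i * (g i * (p i - s i)))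
    + 2 * wsqdist c q s + 2 * wsqdist c u p + wsqdist c p q
  <= 2 * wsqdist c u s + 4 * eta ^+ 2 * wsqdist c g g'.
Proof.
move=> c0; set V1 := \sum_i _ * _ => V1_le0; set V2 := \sum_i _ * _ => V2_le0.
suff : 4 * eta * (\sum_i c i * (g i * (p i - s i)))
    + 2 * wsqdist c q s + 2 * wsqdist c u p + wsqdist c p q
  <= 2 * wsqdist c u s + 4 * eta ^+ 2 * wsqdist c g g' + 4 * V1 + 4 * V2 by lra.
rewrite /V1 /V2 /wsqdist !mulr_sumr -!big_split /=; apply: ler_sum => i _.
rewrite -subr_ge0 (_ : _ - _ = c i * (2 * eta * (g i - g' i) - (p i - q i)) ^+ 2).
  by rewrite mulr_ge0 ?sqr_ge0.
ring.
Qed.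

Lemma optimistic_step_dist_le c u p q g g' eta :
  (forall i, 0 <= c i) ->
  \sum_i c i * ((u i - eta * g' i - p i) * (q i - p i)) <= 0 ->
  \sum_i c i * ((u i - eta * g i - q i) * (p i - q i)) <= 0 ->
  wsqdist c p q <= eta ^+ 2 * wsqdist c g g'.
Proof.
move=> c0; set V1 := \sum_i _ * _ => V1_le0; set V2 := \sum_i _ * _ => V2_le0.
suff : wsqdist c p q <= eta ^+ 2 * wsqdist c g g' + 2 * V1 + 2 * V2 by lra.
rewrite /V1 /V2 /wsqdist !mulr_sumr -!big_split /=; apply: ler_sum => i _.
rewrite -subr_ge0 (_ : _ - _ = c i * (eta * (g i - g' i) - (p i - q i)) ^+ 2).
  by rewrite mulr_ge0 ?sqr_ge0.
ring.
Qed.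

End WeightedSums.

Lemma sqr_le_of_le {R : realDomainType} {a b : R} : 0 <= a -> a <= b -> a ^+ 2 <= b ^+ 2.
Proof. by move=> a0 ab; rewrite lerXn2r // nnegrE (le_trans a0). Qed.

(* Square of [a f - a' f' = a (f - f') + (a - a') f']. *)
Lemma sqr_mulB_le {R : realDomainType} (h a a' f f' : R) :
  0 <= a <= h ->
  (a * f - a' * f') ^+ 2 <= 2 * h ^+ 2 * (f - f') ^+ 2 + 2 * ((a - a') ^+ 2 * f' ^+ 2).
Proof.
move=> /andP[a0 ah]; have := sqr_le_of_le a0 ah.
have := sqr_ge0 (a * (f - f') - (a - a') * f'); have := sqr_ge0 (f - f'); nra.
Qed.

Lemma sum_le_telescope {R : numDomainType} (u V : nat -> R) N :
  (forall t, (0 < t)%N -> u t + V t <= V t.-1) ->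
  \sum_(1 <= t < N.+1) u t + V N <= V 0%N.
Proof.
move=> dec; elim: N => [|N IH]; first by rewrite big_geq // add0r.
rewrite big_nat_recr //= -addrA; apply: le_trans IH; rewrite lerD2l; exact: dec.
Qed.

Lemma exists_le_of_sum_le {R : realDomainType} (u : nat -> R) b T :
  (0 < T)%N -> \sum_(1 <= t < T.+1) u t <= T%:R * b ->
  exists2 t, (1 <= t <= T)%N & u t <= b.
Proof.
move=> T_gt0 sum_le; apply: contrapT => no_t.
have : T%:R * b < \sum_(1 <= t < T.+1) u t.
  rewrite (_ : T%:R * b = \sum_(1 <= t < T.+1) b); last first.
    by rewrite sumr_const_nat subn1 mulr_natl.
  rewrite ltr_sum_nat // => t /andP[t1 tT].
  by rewrite ltNge; apply/negP => ut; apply: no_t; exists t => //; rewrite t1.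
by rewrite ltNge sum_le.
Qed.

Section EuclideanSpace.
Context {R : realType} {n : nat}.
Implicit Types (u v y p : 'rV[R]_n).

Lemma inner_sqr_ge0 u : 0 <= inner u u.
Proof. by apply: sumr_ge0 => i _; rewrite -expr2 sqr_ge0. Qed.

Lemma enorm_ge0 u : 0 <= enorm u.
Proof. exact: sqrtr_ge0. Qed.

Lemma enorm_sqr u : enorm u ^+ 2 = inner u u.
Proof. by rewrite sqr_sqrtr // inner_sqr_ge0. Qed.

Lemma enorm_sqrB u v : enorm (u - v) ^+ 2 = sqdist (u 0) (v 0).
Proof. by rewrite enorm_sqr; apply: eq_bigr => i _; rewrite !mxE expr2. Qed.

Lemma enorm_le_sqr u e : 0 <= e -> (enorm u <= e) = (enorm u ^+ 2 <= e ^+ 2).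
Proof. by move=> e0; rewrite ler_sqr // nnegrE enorm_ge0. Qed.

Lemma sqr_enorm_le u e : enorm u <= e -> enorm u ^+ 2 <= e ^+ 2.
Proof. exact/sqr_le_of_le/enorm_ge0. Qed.

Lemma enorm_eq0 u : (enorm u == 0) = (u == 0).
Proof.
apply/idP/eqP => [|->]; last by rewrite /enorm /inner big1 ?sqrtr0 // => i _; rewrite mxE mul0r.
rewrite sqrtr_eq0 => uu_le0; apply/rowP => i; rewrite mxE.
have /psumr_eq0P uu0 : inner u u = 0 by apply/eqP; rewrite eq_le uu_le0 inner_sqr_ge0.
by apply/eqP; rewrite -sqrf_eq0 expr2 uu0 // => j _; rewrite -expr2 sqr_ge0.
Qed.

Lemma enorm_sqrDZ u v t :
  enorm (u + t *: v) ^+ 2 = enorm u ^+ 2 + 2 * t * inner u v + t ^+ 2 * enorm v ^+ 2.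
Proof.
rewrite !enorm_sqr /inner !mulr_sumr -!big_split /=.
by apply: eq_bigr => i _; rewrite !mxE; ring.
Qed.

Lemma inner_le_enorm u v : inner u v <= enorm u * enorm v.
Proof.
have [u0|u_neq0] := eqVneq (enorm u) 0.
  move/eqP: (u0); rewrite enorm_eq0 => /eqP u_eq0; rewrite u0 mul0r u_eq0.
  by rewrite /inner big1 // => i _; rewrite mxE mul0r.
have [v0|v_neq0] := eqVneq (enorm v) 0.
  move/eqP: (v0); rewrite enorm_eq0 => /eqP v_eq0; rewrite v0 mulr0 v_eq0.
  by rewrite /inner big1 // => i _; rewrite mxE mulr0.
have uv_gt0 : 0 < enorm u * enorm v.
  by rewrite mulr_gt0 // lt_def ?u_neq0 ?v_neq0 enorm_ge0.
set a := enorm u; set b := enorm v.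
have key : 2 * a * b * inner u v <= b ^+ 2 * inner u u + a ^+ 2 * inner v v.
  rewrite /inner !mulr_sumr -big_split /=; apply: ler_sum => i _.
  by rewrite -subr_ge0 (_ : _ - _ = (b * u 0 i - a * v 0 i) ^+ 2) ?sqr_ge0 //; ring.
rewrite -!enorm_sqr -/a -/b in key.
by rewrite -(ler_pM2l uv_gt0) -/a -/b; nra.
Qed.

Lemma enormD_le u v : enorm (u + v) <= enorm u + enorm v.
Proof.
rewrite enorm_le_sqr ?addr_ge0 ?enorm_ge0 // -[v]scale1r enorm_sqrDZ scale1r.
by have := inner_le_enorm u v; have := enorm_ge0 u; have := enorm_ge0 v; nra.
Qed.

Lemma inner_le0_of_segment_min y p v :
  (forall t, 0 < t <= 1 -> enorm (y - p) <= enorm (y - (p + t *: v))) ->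
  inner (y - p) v <= 0.
Proof.
move=> p_min.
have le_t t : 0 < t <= 1 -> 2 * inner (y - p) v <= t * enorm v ^+ 2.
  move=> /[dup] /andP[t_gt0 _] /p_min.
  rewrite enorm_le_sqr ?enorm_ge0 // opprD addrA -scaleNr enorm_sqrDZ => le_sqr.
  by rewrite -(ler_pM2l t_gt0); nra.
have le_1 : 2 * inner (y - p) v <= enorm v ^+ 2.
  by have := le_t 1; rewrite ltr01 lexx mul1r; apply.
rewrite leNgt; apply/negP => I_gt0.
have N_gt0 : 0 < enorm v ^+ 2 by lra.
have := le_t (inner (y - p) v / enorm v ^+ 2).
by rewrite divr_gt0 //= divfK ?gt_eqF // ler_pdivrMr // mul1r; lra.
Qed.

Lemma enorm_le_diam {A : set 'rV[R]_n} {M u v} :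
  (forall x, A x -> forall i, `|x 0 i| <= M) -> A u -> A v -> enorm (u - v) <= diam A.
Proof.
move=> A_bnd Au Av; apply: ub_le_sup; last by exists u => //; exists v.
exists (Num.sqrt (n%:R * (2 * M) ^+ 2)) => _ [x Ax [y Ay <-]].
rewrite /enorm ler_sqrt; last by rewrite mulr_ge0 ?ler0n ?sqr_ge0.
rewrite (_ : n%:R * _ = \sum_(i < n) (2 * M) ^+ 2); last by rewrite sumr_const card_ord mulr_natl.
apply: ler_sum => i _; rewrite !mxE -expr2.
rewrite -real_normK ?num_real // ler_sqr ?nnegrE //.
  by have := ler_normB (x 0 i) (y 0 i); have := A_bnd x Ax i; have := A_bnd y Ay i; lra.
by have := A_bnd x Ax i; have := normr_ge0 (x 0 i); lra.
Qed.

Lemma compact_coord_bounded {A : set 'rV[R]_n} :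
  compact A -> exists M, forall x, A x -> forall i, `|x 0 i| <= M.
Proof.
move=> /compact_bounded [M [_ M_bnd]]; exists (M + 1) => x Ax i.
have M_lt : M < M + 1 by rewrite ltrDl ltr01.
have /= := M_bnd (M + 1) M_lt x Ax; apply: le_trans.
rewrite [X in _ <= X]/Num.norm /= mx_normrE.
exact: (le_bigmax _ (fun ij : 'I_1 * 'I_n => `|x ij.1 ij.2|) (0, i)).
Qed.

Lemma lipschitz_enorm_le {A : set 'rV[R]_n} {G : 'rV[R]_n -> 'rV[R]_n} {L D x0} :
  (forall x y, A x -> A y -> enorm (G x - G y) <= L * enorm (x - y)) ->
  (forall x y, A x -> A y -> enorm (x - y) <= D) -> A x0 ->
  forall y, A y -> enorm (G y) <= enorm (G x0) + `|L| * D.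
Proof.
move=> G_lip A_diam Ax0 y Ay.
rewrite -[G y](addrNK (G x0)) addrC; apply: le_trans (enormD_le _ _) _.
rewrite lerD2l; apply: le_trans (G_lip _ _ Ay Ax0) _.
apply: le_trans (ler_wpM2r (enorm_ge0 _) (ler_norm L)) _.
by rewrite ler_wpM2l // A_diam.
Qed.

End EuclideanSpace.

Section Blocks.
Context {R : realType} {n d : nat} {blk : 'I_n -> 'I_d} {Z : 'I_d -> set 'rV[R]_n}.
Implicit Types (u v y p z : 'rV[R]_n).
Local Notation X := (prodset blk Z).

Lemma blockprojE r u i : blockproj blk r u 0 i = if blk i == r then u 0 i else 0.
Proof. by rewrite !mxE; case: eqP; rewrite ?mul1r ?mul0r. Qed.

Lemma blockfunE (a : 'I_d -> 'rV[R]_n -> R) x i : blockfun blk a x 0 i = a (blk i) x.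
Proof.
rewrite summxE (bigD1 (blk i)) //= big1 => [|r r_neq]; first by rewrite !mxE eqxx mulr1 addr0.
by rewrite !mxE eq_sym (negbTE r_neq) mulr0.
Qed.

Lemma blockprojB r u v : blockproj blk r (u - v) = blockproj blk r u - blockproj blk r v.
Proof. by apply/rowP => i; rewrite !(blockprojE, mxE); case: ifP; rewrite ?subr0. Qed.

Lemma inner_blockprojr r u v :
  inner u (blockproj blk r v) = \sum_(i | blk i == r) u 0 i * v 0 i.
Proof.
by rewrite big_mkcond; apply: eq_bigr => i _; rewrite blockprojE; case: ifP; rewrite ?mulr0.
Qed.

Lemma inner_blockproj r u v :
  inner (blockproj blk r u) (blockproj blk r v) = \sum_(i | blk i == r) u 0 i * v 0 i.
Proof.
rewrite -inner_blockprojr; apply: eq_bigr => i _.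
by rewrite !blockprojE; case: ifP; rewrite ?mul0r ?mulr0.
Qed.

Lemma block_inner_le r u v :
  \sum_(i | blk i == r) u 0 i * v 0 i <= enorm (blockproj blk r u) * enorm (blockproj blk r v).
Proof. by rewrite -inner_blockproj inner_le_enorm. Qed.

Lemma enorm_blockproj_le r u : enorm (blockproj blk r u) <= enorm u.
Proof.
rewrite ler_sqrt ?inner_sqr_ge0 //; apply: ler_sum => i _.
by rewrite blockprojE; case: ifP; rewrite ?mul0r -?expr2 ?sqr_ge0.
Qed.

Lemma prodset_segment r p z t :
  (forall r, convex_set (Z r)) -> X p -> X z -> 0 <= t <= 1 ->
  X (p + t *: blockproj blk r (z - p)).
Proof.
move=> Z_cvx Xp Xz /andP[t0 t1] s; have [->|s_neq] := eqVneq s r.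
  have := Z_cvx r (blockproj blk r z) (blockproj blk r p) (Itv01 t0 t1).
  rewrite !in_setE => /(_ (Xz r) (Xp r)).
  suff -> : blockproj blk r (p + t *: blockproj blk r (z - p)) =
            t *: blockproj blk r z + (1 - t) *: blockproj blk r p by [].
  by apply/rowP => i; rewrite !(blockprojE, mxE); case: (blk i == r) => /=; ring.
congr (Z s _): (Xp s); apply/rowP => i; rewrite !(blockprojE, mxE).
by case: (eqVneq (blk i) s) => [->|]; rewrite ?(negbTE s_neq) ?mul0r ?mulr0 ?addr0.
Qed.

Lemma proj_prodset_block_le0 r {u v p z eta} :
  (forall r, convex_set (Z r)) -> is_proj X (u - eta *: v) p -> X z ->
  \sum_(i | blk i == r) (u 0 i - eta * v 0 i - p 0 i) * (z 0 i - p 0 i) <= 0.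
Proof.
move=> Z_cvx [Xp p_min] Xz.
have := @inner_le0_of_segment_min _ _ (u - eta *: v) p (blockproj blk r (z - p)).
rewrite inner_blockprojr; under eq_bigr do rewrite !mxE; apply => t /andP[t0 t1].
by apply: p_min; apply: prodset_segment => //; rewrite (ltW t0) t1.
Qed.

(* Empty blocks contribute nothing, so [c] need only be nonnegative on the
   blocks that occur. *)
Lemma proj_prodset_le0 (c : 'I_d -> R) {u v p z eta} :
  (forall i, 0 <= c (blk i)) -> (forall r, convex_set (Z r)) ->
  is_proj X (u - eta *: v) p -> X z ->
  \sum_i c (blk i) * ((u 0 i - eta * v 0 i - p 0 i) * (z 0 i - p 0 i)) <= 0.
Proof.
move=> c_ge0 Z_cvx p_proj Xz; rewrite (partition_big blk xpredT) //=; apply: sumr_le0 => r _.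
rewrite (eq_bigr (fun i => `|c r| * ((u 0 i - eta * v 0 i - p 0 i) * (z 0 i - p 0 i)))).
  by rewrite -mulr_sumr mulr_ge0_le0 ?normr_ge0 ?proj_prodset_block_le0.
by move=> i /eqP <-; rewrite ger0_norm.
Qed.

Lemma prodset_coord_bounded : (forall r, compact (Z r)) ->
  exists M, forall x, X x -> forall i, `|x 0 i| <= M.
Proof.
move=> Z_cpt; have [M M_bnd] := boolp.choice (fun r => compact_coord_bounded (Z_cpt r)).
exists (\big[Num.max/0]_r M r) => x Xx i.
have := M_bnd (blk i) _ (Xx (blk i)) i; rewrite blockprojE eqxx => /le_trans; apply.
exact: (le_bigmax _ M (blk i)).
Qed.

Lemma diam_le_maxdiam r : diam (Z r) <= maxdiam Z.
Proof. exact: (le_bigmax _ (fun r => diam (Z r)) r). Qed.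

Lemma maxdiam_ge0 : 0 <= maxdiam Z.
Proof. exact: bigmax_ge_id. Qed.

Lemma enorm_blockproj_le_BF {Y : set 'rV[R]_n} {G : 'rV[R]_n -> 'rV[R]_n} {M x} r :
  (forall y, Y y -> enorm (G y) <= M) -> Y x -> enorm (blockproj blk r (G x)) <= BF blk Y G.
Proof.
move=> G_bnd Yx.
apply: le_trans (le_bigmax _ (fun r => sup [set enorm (blockproj blk r (G y)) | y in Y]) r).
apply: ub_le_sup; last by exists x.
by exists M => _ [y Yy <-]; apply: le_trans (enorm_blockproj_le _ _) (G_bnd y Yy).
Qed.

End Blocks.

Lemma BF_dim0 (R : realType) d (blk : 'I_0 -> 'I_d) (Y : set 'rV[R]_0) G :
  Y !=set0 -> BF blk Y G = 0.
Proof.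
move=> [y0 Yy0]; rewrite /BF; elim/big_ind: _ => // [x y -> ->|r _]; first exact: maxxx.
suff -> : [set enorm (blockproj blk r (G y)) | y in Y] = [set 0] by rewrite sup1.
have enorm0 (u : 'rV[R]_0) : enorm u = 0 by rewrite /enorm /inner big_ord0 sqrtr0.
by apply/seteqP; split => [_ [y _ <-]|_ ->]; [rewrite enorm0 | exists y0; rewrite ?enorm0].
Qed.

Section RescaledOptimisticGradient.
Variables (R : realType) (n d : nat) (blk : 'I_n -> 'I_d) (Z : 'I_d -> set 'rV[R]_n).
Variables (F : 'rV[R]_n -> 'rV[R]_n) (a w : 'I_d -> 'rV[R]_n -> R).
Variables (L alpha l h B D Dm eta eps : R) (T : nat) (xs xh : nat -> 'rV[R]_n) (s : 'rV[R]_n).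
Implicit Types (u x y p q z : 'rV[R]_n).
Local Notation X := (prodset blk Z).
Local Notation grad x := (hadamard (blockfun blk a x) (F x)).

Hypothesis Z_convex : forall r, convex_set (Z r).
Hypothesis F_lipschitz :
  forall x y, X x -> X y -> enorm (F x - F y) <= L * enorm (x - y).
Hypothesis a_lipschitz :
  forall r x y, X x -> X y -> `|a r x - a r y| <= alpha * enorm (x - y).
Hypothesis a_bounds : forall x i, X x -> l <= a (blk i) x <= h.
Hypothesis l_gt0 : 0 < l.
Hypothesis l_le_h : l <= h.
Hypothesis F_block_le : forall r x, X x -> enorm (blockproj blk r (F x)) <= B.
Hypothesis X_diam : forall u v, X u -> X v -> enorm (u - v) <= D.
Hypothesis Z_diam : forall r u v, Z r u -> Z r v -> enorm (u - v) <= Dm.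
Hypothesis eta_gt0 : 0 < eta.
Hypothesis eta_small :
  16 * eta ^+ 2 * (h ^+ 3 * L ^+ 2 + h * B ^+ 2 * alpha ^+ 2 * d%:R) <= l.
Hypothesis xs0_in : X (xs 0).
Hypothesis xh1 : xh 1%N = xs 0%N.
Hypothesis xs_proj : forall t, (0 < t)%N -> is_proj X (xh t - eta *: grad (xs t.-1)) (xs t).
Hypothesis xh_proj : forall t, (0 < t)%N -> is_proj X (xh t - eta *: grad (xs t)) (xh t.+1).
Hypothesis s_in : X s.
Hypothesis w_bounds : forall i, l <= w (blk i) s <= h.
Hypothesis minty : 0 <= \sum_(1 <= t < T.+1)
  inner (xs t - s) (hadamard (hadamard (F (xs t)) (blockfun blk a (xs t))) (blockfun blk w s)).

Let K := h ^+ 2 * L ^+ 2 + d%:R * alpha ^+ 2 * B ^+ 2.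
(* Distances are weighted by c = W(s), s the Minty point: Phi is the potential
   |xh t - s|^2, Aw and Bw are the residuals of the two half-steps, Gw is the
   squared variation of grad between consecutive iterates and Mt is the t-th
   summand of the Minty sum. *)
Let c i := w (blk i) s.
Let Phi t := wsqdist c (xh t 0) (s 0).
Let Aw t := wsqdist c (xh t 0) (xs t 0).
Let Bw t := wsqdist c (xs t 0) (xh t.+1 0).
Let Gw t := wsqdist c (grad (xs t) 0) (grad (xs t.-1) 0).
Let Mt t := \sum_i c i * (grad (xs t) 0 i * (xs t 0 i - s 0 i)).

Lemma xs_in t : X (xs t).
Proof. by case: t => // t; have [] := xs_proj _ (ltn0Sn t). Qed.

Lemma xh_in {t} : (0 < t)%N -> X (xh t).
Proof. by case: t => [|[|t]] // _; [rewrite xh1 | have [] := xh_proj _ (ltn0Sn t)]. Qed.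

Lemma l_le_c i : l <= c i.
Proof. by have /andP[] := w_bounds i. Qed.

Lemma c_le_h i : c i <= h.
Proof. by have /andP[] := w_bounds i. Qed.

Lemma c_ge0 i : 0 <= c i.
Proof. exact: le_trans (ltW l_gt0) (l_le_c i). Qed.

Lemma h_ge0 : 0 <= h.
Proof. exact: le_trans (ltW l_gt0) l_le_h. Qed.

Lemma eta_K_le : 16 * eta ^+ 2 * (h * K) <= l.
Proof. by rewrite (_ : h * K = h ^+ 3 * L ^+ 2 + h * B ^+ 2 * alpha ^+ 2 * d%:R) // /K; ring. Qed.

Lemma gradE x i : grad x 0 i = a (blk i) x * F x 0 i.
Proof. by rewrite mxE blockfunE. Qed.

Lemma a_ge0_le_h {x} i : X x -> 0 <= a (blk i) x <= h.
Proof. by move=> /(a_bounds _ i)/andP[la ->]; rewrite (le_trans (ltW l_gt0) la). Qed.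

Lemma grad_step_le0 {u x p z} : is_proj X (u - eta *: grad x) p -> X z ->
  \sum_i c i * ((u 0 i - eta * grad x 0 i - p 0 i) * (z 0 i - p 0 i)) <= 0.
Proof. exact: (proj_prodset_le0 (fun r => w r s) c_ge0 Z_convex). Qed.

Lemma grad_sqdist_le {x y} : X x -> X y ->
  sqdist (grad x 0) (grad y 0) <= 2 * K * sqdist (x 0) (y 0).
Proof.
move=> Xx Xy; set E := sqdist (x 0) (y 0).
have E_ge0 : 0 <= E := sqdist_ge0 _ _.
have F_sq : sqdist (F x 0) (F y 0) <= L ^+ 2 * E.
  by rewrite /E -!enorm_sqrB -exprMn sqr_enorm_le ?F_lipschitz.
have block_sq : \sum_i (a (blk i) x - a (blk i) y) ^+ 2 * F y 0 i ^+ 2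
                <= d%:R * (alpha ^+ 2 * E * B ^+ 2).
  rewrite (partition_big blk xpredT) //= (_ : d%:R * _ = \sum_(r < d) alpha ^+ 2 * E * B ^+ 2).
    2: by rewrite sumr_const card_ord mulr_natl.
  apply: ler_sum => r _; rewrite (eq_bigr (fun i => (a r x - a r y) ^+ 2 * F y 0 i ^+ 2)).
    rewrite -mulr_sumr; apply: ler_pM.
    + exact: sqr_ge0.
    + by apply: sumr_ge0 => i _; rewrite sqr_ge0.
    + by rewrite /E -enorm_sqrB -exprMn -[X in X <= _]real_normK ?num_real //;
        rewrite sqr_le_of_le ?a_lipschitz.
    + under eq_bigr do rewrite expr2; rewrite -inner_blockproj -enorm_sqr.
      by rewrite sqr_enorm_le ?F_block_le.
  by move=> i /eqP <-.
have split_sq : sqdist (grad x 0) (grad y 0) <= \sum_i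
    (2 * h ^+ 2 * (F x 0 i - F y 0 i) ^+ 2 + 2 * ((a (blk i) x - a (blk i) y) ^+ 2 * F y 0 i ^+ 2)).
  by apply: ler_sum => i _; rewrite !gradE sqr_mulB_le ?a_ge0_le_h.
rewrite big_split /= -!mulr_sumr in split_sq.
have := ler_wpM2l (sqr_ge0 h) F_sq; rewrite /K /sqdist in F_sq split_sq * => hF_sq.
lra.
Qed.

Lemma grad_var_le {t} : (0 < t)%N -> 4 * eta ^+ 2 * Gw t <= Aw t + Bw t.-1.
Proof.
move=> t_gt0; set Sx := sqdist (xs t 0) (xs t.-1 0).
have Sx_ge0 : 0 <= Sx := sqdist_ge0 _ _.
have Gw_le : Gw t <= h * (2 * K * Sx).
  apply: le_trans (wsqdist_le _ _ _ _ c_le_h) _.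
  by have := ler_wpM2l h_ge0 (grad_sqdist_le (xs_in t) (xs_in t.-1)).
have Sx_le : l * Sx <= 2 * (Aw t + Bw t.-1).
  have A_ge : l * sqdist (xs t 0) (xh t 0) <= Aw t.
    by rewrite sqdistC; apply: wsqdist_ge _ _ _ _ l_le_c.
  have B_ge : l * sqdist (xh t 0) (xs t.-1 0) <= Bw t.-1.
    by rewrite sqdistC /Bw prednK //; apply: wsqdist_ge _ _ _ _ l_le_c.
  have := ler_wpM2l (ltW l_gt0) (sqdist_le_split (xs t 0) (xh t 0) (xs t.-1 0)).
  rewrite -/Sx; lra.
have := ler_wpM2l (mulr_ge0 (ler0n _ 4) (sqr_ge0 eta)) Gw_le.
have := ler_wpM2r Sx_ge0 eta_K_le; lra.
Qed.

Lemma descent_step {t} : (0 < t)%N ->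
  4 * eta * Mt t + 2 * Phi t.+1 + Aw t + Bw t <= 2 * Phi t + Bw t.-1.
Proof.
move=> t_gt0.
have step : 4 * eta * Mt t + 2 * Phi t.+1 + 2 * Aw t + Bw t <= 2 * Phi t + 4 * eta ^+ 2 * Gw t.
  exact: optimistic_step_le c_ge0 (grad_step_le0 (xs_proj _ t_gt0) (xh_in (ltn0Sn t)))
                                  (grad_step_le0 (xh_proj _ t_gt0) s_in).
by have := grad_var_le t_gt0; lra.
Qed.

Lemma Bw_step {t} : (0 < t)%N -> 4 * Bw t <= Aw t + Bw t.-1.
Proof.
move=> t_gt0.
have step : Bw t <= eta ^+ 2 * Gw t.
  exact: optimistic_step_dist_le c_ge0 (grad_step_le0 (xs_proj _ t_gt0) (xh_in (ltn0Sn t)))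
                                       (grad_step_le0 (xh_proj _ t_gt0) (xs_in t)).
by have := grad_var_le t_gt0; lra.
Qed.

Lemma Bw0 : Bw 0%N = 0.
Proof. by rewrite /Bw /wsqdist xh1 big1 // => i _; rewrite subrr expr2 !mulr0. Qed.

Lemma sum_Mt_ge0 : 0 <= \sum_(1 <= t < T.+1) Mt t.
Proof.
rewrite (eq_bigr (fun t => inner (xs t - s)
  (hadamard (hadamard (F (xs t)) (blockfun blk a (xs t))) (blockfun blk w s)))) // => t _.
by apply: eq_bigr => i _; rewrite gradE !(mxE, blockfunE) /c; ring.
Qed.

Lemma sum_Aw_le : \sum_(1 <= t < T.+1) Aw t <= 2 * h * D ^+ 2.
Proof.
have tele : \sum_(1 <= t < T.+1) (4 * eta * Mt t + Aw t) + (2 * Phi T.+1 + Bw T)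
            <= 2 * Phi 1%N + Bw 0%N.
  apply: (sum_le_telescope (fun t => 4 * eta * Mt t + Aw t) (fun t => 2 * Phi t.+1 + Bw t)).
  by move=> t t_gt0; cbv beta; rewrite prednK //; have := descent_step t_gt0; lra.
rewrite big_split /= -mulr_sumr Bw0 in tele.
have Phi1 : Phi 1%N <= h * D ^+ 2.
  apply: le_trans (wsqdist_le _ _ _ _ c_le_h) _.
  apply: ler_wpM2l h_ge0 _ _ _; rewrite -enorm_sqrB.
  by apply: sqr_enorm_le; apply: X_diam => //; apply: xh_in.
have : 0 <= 4 * eta * \sum_(1 <= t < T.+1) Mt t.
  by rewrite mulr_ge0 ?sum_Mt_ge0 // mulr_ge0 // ltW.
have : 0 <= Phi T.+1 := wsqdist_ge0 _ _ _ c_ge0.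
have : 0 <= Bw T := wsqdist_ge0 _ _ _ c_ge0.
lra.
Qed.

Lemma sum_residual_le : 3 * \sum_(1 <= t < T.+1) (Aw t + Bw t) <= 8 * h * D ^+ 2.
Proof.
have tele : \sum_(1 <= t < T.+1) (3 * Bw t - Aw t) + Bw T <= Bw 0%N.
  apply: (sum_le_telescope (fun t => 3 * Bw t - Aw t) Bw).
  by move=> t /Bw_step; cbv beta; lra.
rewrite sumrB -mulr_sumr Bw0 in tele; rewrite big_split /=.
have := sum_Aw_le; have : 0 <= Bw T := wsqdist_ge0 _ _ _ c_ge0.
lra.
Qed.

Lemma exists_small_residual : 0 < eps -> (0 < T)%N ->
  2 * D ^+ 2 * h / (l * eps ^+ 2) <= T%:R ->
  exists2 t, (1 <= t <= T)%N & Aw t + Bw t <= 2 * l * eps ^+ 2.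
Proof.
move=> eps_gt0 T_gt0 T_large; apply: exists_le_of_sum_le => //.
rewrite ler_pdivrMr ?mulr_gt0 ?exprn_gt0 // in T_large.
have := mulr_ge0 h_ge0 (sqr_ge0 D).
have := sum_residual_le; lra.
Qed.

Lemma residual_dist_le {t e} : 0 <= e -> Aw t + Bw t <= 2 * l * e ^+ 2 ->
  enorm (xh t - xh t.+1) <= 2 * e /\ enorm (xs t - xh t.+1) <= 2 * e.
Proof.
move=> e_ge0 small.
have A_ge : l * sqdist (xh t 0) (xs t 0) <= Aw t := wsqdist_ge _ _ _ _ l_le_c.
have B_ge : l * sqdist (xs t 0) (xh t.+1 0) <= Bw t := wsqdist_ge _ _ _ _ l_le_c.
have dist_le : sqdist (xh t 0) (xs t 0) + sqdist (xs t 0) (xh t.+1 0) <= 2 * e ^+ 2.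
  by rewrite -(ler_pM2l l_gt0); lra.
have := sqdist_ge0 (xh t 0) (xs t 0); have := sqdist_ge0 (xs t 0) (xh t.+1 0).
have := sqdist_le_split (xh t 0) (xs t 0) (xh t.+1 0).
by rewrite !enorm_le_sqr ?mulr_ge0 // !enorm_sqrB; split; lra.
Qed.

Lemma block_proj_le {u p q z} r : is_proj X (u - eta *: grad p) q -> X z ->
  eta * a r p * \sum_(i | blk i == r) F p 0 i * (q 0 i - z 0 i) <= enorm (u - q) * Dm.
Proof.
move=> q_proj Xz; set S1 := \sum_(i | blk i == r) (u 0 i - q 0 i) * (q 0 i - z 0 i).
apply: (@le_trans _ _ S1).
  rewrite -subr_le0 (_ : eta * a r p * _ - S1 = \sum_(i | blk i == r)
      (u 0 i - eta * grad p 0 i - q 0 i) * (z 0 i - q 0 i)).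
    by have := proj_prodset_block_le0 r Z_convex q_proj Xz.
  by rewrite /S1 mulr_sumr -sumrB; apply: eq_bigr => j /eqP bj; rewrite gradE bj; ring.
rewrite (_ : S1 = \sum_(i | blk i == r) (u - q) 0 i * (q - z) 0 i); last first.
  by apply: eq_bigr => j _; rewrite !mxE.
apply: le_trans (block_inner_le r (u - q) (q - z)) _.
apply: ler_pM; rewrite ?enorm_ge0 ?enorm_blockproj_le //.
by rewrite blockprojB; apply: Z_diam; [exact: q_proj.1 r | exact: Xz r].
Qed.

Lemma block_F_inner_le {p} q r : X p ->
  \sum_(i | blk i == r) F p 0 i * (p 0 i - q 0 i) <= B * enorm (p - q).
Proof.
move=> Xp; rewrite (_ : \sum_(i | _) _ = \sum_(i | blk i == r) F p 0 i * (p - q) 0 i).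
  apply: le_trans (block_inner_le r (F p) (p - q)) _.
  by apply: ler_pM; rewrite ?enorm_ge0 ?F_block_le ?enorm_blockproj_le.
by apply: eq_bigr => j _; rewrite !mxE.
Qed.

Lemma block_gap_le {u p q z e} r :
  is_proj X (u - eta *: grad p) q -> X p -> X z ->
  enorm (u - q) <= 2 * e -> enorm (p - q) <= 2 * e ->
  \sum_(i | blk i == r) (p 0 i - z 0 i) * F p 0 i <= 2 * (Dm / (eta * l) + h * B / l) * e.
Proof.
move=> q_proj Xp Xz uq_le pq_le; set S := \sum_(i | _) _.
have e_ge0 : 0 <= e by have := enorm_ge0 (u - q); lra.
have B_ge0 : 0 <= B := le_trans (enorm_ge0 _) (F_block_le r _ Xp).
have Dm_ge0 : 0 <= Dm := le_trans (enorm_ge0 _) (Z_diam _ _ _ (Xp r) (Xp r)).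
have [S_le0|S_gt0] := lerP S 0.
  apply: le_trans S_le0 _; rewrite !mulr_ge0 ?addr_ge0 ?divr_ge0 ?mulr_ge0 ?h_ge0 //;
  by rewrite ltW.
have [i /eqP bi] : exists i, blk i == r.
  apply/existsP; apply: contraTT S_gt0 => /existsPn no_i.
  by rewrite -leNgt /S big_pred0 // => i; apply: negbTE.
have /andP[l_le_ar ar_le_h] := a_bounds _ i Xp; rewrite bi in l_le_ar ar_le_h.
set S2 := \sum_(i | blk i == r) F p 0 i * (q 0 i - z 0 i).
set S3 := \sum_(i | blk i == r) F p 0 i * (p 0 i - q 0 i).
have S_split : S = S2 + S3 by rewrite /S /S2 /S3 -big_split; apply: eq_bigr => j _ /=; ring.
have S2_le : eta * a r p * S2 <= 2 * e * Dm.
  exact: le_trans (block_proj_le r q_proj Xz) (ler_wpM2r Dm_ge0 uq_le).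
have S3_le : S3 <= B * (2 * e).
  exact: le_trans (block_F_inner_le q r Xp) (ler_wpM2l B_ge0 pq_le).
have etal_gt0 : 0 < eta * l by rewrite mulr_gt0.
rewrite -(ler_pM2l etal_gt0).
rewrite (_ : eta * l * (2 * _ * e) = 2 * e * Dm + eta * h * (B * (2 * e))); last first.
  by field; rewrite ?gt_eqF.
have := ler_wpM2l (ltW eta_gt0) (ler_wpM2r (ltW S_gt0) l_le_ar).
have := ler_wpM2l (mulr_ge0 (ltW eta_gt0) (le_trans (ltW l_gt0) l_le_ar)) S3_le.
have := ler_wpM2l (ltW eta_gt0) (ler_wpM2r (mulr_ge0 B_ge0 (mulr_ge0 (ler0n _ 2) e_ge0)) ar_le_h).
rewrite S_split; nra.
Qed.

Lemma gap_le {u p q z e} :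
  is_proj X (u - eta *: grad p) q -> X p -> X z ->
  enorm (u - q) <= 2 * e -> enorm (p - q) <= 2 * e ->
  inner p (F p) - inner z (F p) <= 2 * d%:R * (Dm / (eta * l) + h * B / l) * e.
Proof.
move=> q_proj Xp Xz uq_le pq_le.
rewrite /inner -sumrB (partition_big blk xpredT) //=.
rewrite (_ : 2 * d%:R * _ * e = \sum_(r < d) 2 * (Dm / (eta * l) + h * B / l) * e); last first.
  by rewrite sumr_const card_ord -mulr_natr; ring.
apply: ler_sum => r _; under eq_bigr do rewrite -mulrBl.
exact: block_gap_le q_proj Xp Xz uq_le pq_le.
Qed.

Lemma exists_iterate_small_gap :
  0 < eps -> (0 < T)%N -> 2 * D ^+ 2 * h / (l * eps ^+ 2) <= T%:R ->
  exists2 t, (1 <= t <= T)%N & forall z, X z ->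
    inner (xs t) (F (xs t)) - inner z (F (xs t))
    <= 2 * d%:R * (Dm / (eta * l) + h * B / l) * eps.
Proof.
move=> eps_gt0 T_gt0 T_large.
have [t /andP[t_gt0 tT] small] := exists_small_residual eps_gt0 T_gt0 T_large.
have [uq_le pq_le] := residual_dist_le (ltW eps_gt0) small.
by exists t => [|z Xz]; [rewrite t_gt0 | exact: gap_le (xh_proj _ t_gt0) (xs_in t) Xz uq_le pq_le].
Qed.

End RescaledOptimisticGradient.

Arguments exists_iterate_small_gap {R n d blk Z F a w L alpha l h B D Dm eta eps T xs xh s}.

Theorem theorem2 (R : realType) (n d : nat) (blk : 'I_n -> 'I_d)
  (Z : 'I_d -> set 'rV[R]_n)
  (F : 'rV[R]_n -> 'rV[R]_n) (L : R)
  (a w : 'I_d -> 'rV[R]_n -> R) (alpha l h : R)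
  (eta eps : R) (T : nat)
  (xs xh : nat -> 'rV[R]_n) :
  (* X = prod_r Z_r, Z_r nonempty convex compact, living on block r *)
  (forall r, Z r !=set0) ->
  (forall r, convex_set (Z r)) ->
  (forall r, compact (Z r)) ->
  (forall r z, Z r z -> blockproj blk r z = z) ->
  (* F is L-Lipschitz on X *)
  (forall x y, prodset blk Z x -> prodset blk Z y ->
     enorm (F x - F y) <= L * enorm (x - y)) ->
  (* A = sum_r a_r 1_{Z_r}, a_r alpha-Lipschitz, 0 < l <= A <= h *)
  0 < l ->
  (forall r x y, prodset blk Z x -> prodset blk Z y ->
     `|a r x - a r y| <= alpha * enorm (x - y)) ->
  (forall x i, prodset blk Z x ->
     l <= blockfun blk a x 0 i <= h) ->
  (* W = sum_r w_r 1_{Z_r}, 0 < l <= W <= h *)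
  (forall x i, prodset blk Z x ->
     l <= blockfun blk w x 0 i <= h) ->
  (* average generalized Minty property *)
  avg_gen_minty (prodset blk Z) F (blockfun blk a) (blockfun blk w) ->
  (* parameters *)
  0 < eps ->
  0 < eta ->
  16 * eta ^+ 2 * (h ^+ 3 * L ^+ 2 + h * BF blk (prodset blk Z) F ^+ 2 * alpha ^+ 2 * d%:R) <= l ->
  (0 < T)%N ->
  2 * diam (prodset blk Z) ^+ 2 * h / (l * eps ^+ 2) <= T%:R ->
  (* rescaled optimistic gradient descent *)
  prodset blk Z (xs 0%N) ->
  xh 1%N = xs 0%N ->
  (forall t, (1 <= t)%N ->
     is_proj (prodset blk Z)
       (xh t - eta *: hadamard (blockfun blk a (xs t.-1)) (F (xs t.-1))) (xs t)) ->
  (forall t, (1 <= t)%N ->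
     is_proj (prodset blk Z)
       (xh t - eta *: hadamard (blockfun blk a (xs t)) (F (xs t))) (xh t.+1)) ->
  exists2 t, (1 <= t <= T)%N &
    forall xst, prodset blk Z xst ->
      inner (xs t) (F (xs t)) - inner xst (F (xs t)) <=
      2 * d%:R * (maxdiam Z / (eta * l) + h * BF blk (prodset blk Z) F / l) * eps.
Proof.
move=> _ Z_cvx Z_cpt _ F_lip l_gt0 a_lip a_bnd w_bnd minty eps_gt0 eta_gt0 eta_small
  T_gt0 T_large xs0_in xh1 xs_proj xh_proj.
have xs_in t : prodset blk Z (xs t) by case: t => // t; have [] := xs_proj t.+1 isT.
(* Without coordinates h is unconstrained, but BF vanishes. *)
have [n0|n_gt0] := posnP n.
  exists 1%N => [|z _]; first by rewrite T_gt0.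
  subst n; rewrite /inner !big_ord0 subrr BF_dim0; last by exists (xs 0%N).
  rewrite mulr0 mul0r addr0; apply: mulr_ge0 (ltW eps_gt0); apply: mulr_ge0.
    exact: mulr_ge0 (ler0n _ 2) (ler0n _ d).
  exact: divr_ge0 maxdiam_ge0 (ltW (mulr_gt0 eta_gt0 l_gt0)).
have l_le_h : l <= h.
  by have /andP[] := a_bnd _ (Ordinal n_gt0) xs0_in; apply: le_trans.
have [M M_bnd] := prodset_coord_bounded (blk := blk) Z_cpt.
have X_diam u v : prodset blk Z u -> prodset blk Z v -> enorm (u - v) <= diam (prodset blk Z).
  exact: enorm_le_diam M_bnd.
have Z_diam r u v : Z r u -> Z r v -> enorm (u - v) <= maxdiam Z.
  have [Mr Mr_bnd] := compact_coord_bounded (Z_cpt r).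
  by move=> Zu Zv; apply: le_trans (enorm_le_diam Mr_bnd Zu Zv) (diam_le_maxdiam r).
have F_block r x : prodset blk Z x -> enorm (blockproj blk r (F x)) <= BF blk (prodset blk Z) F.
  exact/enorm_blockproj_le_BF/(lipschitz_enorm_le F_lip X_diam xs0_in).
have [s Xs minty_s] := minty T xs (fun t _ => xs_in t).
have a_bnd' x i : prodset blk Z x -> l <= a (blk i) x <= h by rewrite -blockfunE; apply: a_bnd.
have w_bnd' i : l <= w (blk i) s <= h by rewrite -blockfunE; apply: w_bnd.
exact: exists_iterate_small_gap Z_cvx F_lip a_lip a_bnd' l_gt0 l_le_h F_block X_diam Z_diam
  eta_gt0 eta_small xs0_in xh1 xs_proj xh_proj Xs w_bnd' minty_s eps_gt0 T_gt0 T_large.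
Qed.
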